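(* Let $w\ge5$ and $n$ be integers, and let $B\subseteq[n-1]$ be a set with largest element $b$ (with $b=0$ if $B$ is empty). If $n\ge w(2b+w^2)$, then there exists a $B$-free $(n,w-1)$ modular Golomb ruler.
   Context: An $(n,w)$ modular Golomb ruler is a set of $w$ elements $\{a_1,\dots,a_w\}\subseteq\mathbb Z_n$ such that all differences $a_i-a_j$ ($1\le i\ne j\le w$), computed in $\mathbb Z_n$, are nonzero and pairwise distinct; this set of differences is its set of differences. For a finite set $B\subseteq[n-1]=\{1,\dots,n-1\}$, a modular Golomb ruler is $B$-free if no element of $B$, viewed as an element of $\mathbb Z_n$, lies in its set of differences. *)

From mathcomp Require Import all_boot all_algebra.
Set Implicit Arguments. Unset Strict Implicit. Unset Printing Implicit Defensive.
Import GRing.Theory.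
Local Open Scope ring_scope.

Definition diff_set (n : nat) (A : {set 'Z_n}) : {set 'Z_n} :=
  [set x - y | x in A, y in A & x != y].

Definition modular_golomb (n w : nat) (A : {set 'Z_n}) : Prop :=
  #|A| = w /\
  (forall x y, x \in A -> y \in A -> x != y -> x - y != 0) /\
  (forall x y u v, x \in A -> y \in A -> u \in A -> v \in A ->
     x != y -> u != v -> x - y = u - v -> x = u /\ y = v).

Definition B_free (n : nat) (B : seq nat) (A : {set 'Z_n}) : Prop :=
  forall b, b \in B -> (b%:R : 'Z_n) \notin diff_set A.

From mathcomp Require Import all_boot all_algebra.
From mathcomp Require Import zify.

(* Take the w - 1 marks a_i = i L + C(i, 2), 0 <= i < w - 1, in Z_n with
   n = (w - 1) L + r and 2 C(w - 2, 2) < r < L.  Read in [0, n), a difference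
   a_i - a_j has Euclidean division by L with quotient (i - j) mod (w - 1) and
   remainder C(i, 2) - C(j, 2) <= C(w - 2, 2) if j < i, but
   r - (C(j, 2) - C(i, 2)) > C(w - 2, 2) if i < j.  So the remainder tells the
   two cases apart, the quotient gives i - j, and since
   C(j + d, 2) - C(j, 2) = j d + C(d, 2) is increasing in j, the remainder then
   gives j.  Every difference is at least L > max B, hence the ruler is
   B-free; the bound on n leaves room for such L and r. *)

Definition cdiff (n x y : nat) : nat := if y <= x then x - y else n - (y - x).

Lemma val_Zp_sub p (x y : 'I_p.+1) : val (x - y)%R = cdiff p.+1 x y.
Proof.
have x_lt := ltn_ord x; have y_lt := ltn_ord y.
have -> : val (x - y)%R = (x + (p.+1 - y) %% p.+1) %% p.+1 by [].
rewrite /cdiff modnDmr; case: leqP => le_yx.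
- by rewrite addnBA 1?ltnW // addnC -addnBA // modnDl modn_small //; lia.
- by rewrite modn_small; lia.
Qed.

Lemma bin2D j d : 'C(j + d, 2) = 'C(j, 2) + j * d + 'C(d, 2).
Proof.
elim: d => [|d IHd]; first by rewrite !addn0 muln0 addn0.
by rewrite addnS !binS !bin1 IHd; lia.
Qed.

Lemma bin2_subn_inj {i j k l} : j < i -> l < k -> i - j = k - l ->
  'C(i, 2) - 'C(j, 2) = 'C(k, 2) - 'C(l, 2) -> i = k /\ j = l.
Proof.
move=> lt_ji lt_lk eq_d; set d := i - j in eq_d.
have d_gt0 : 0 < d by rewrite subn_gt0.
have -> : i = j + d by rewrite subnKC 1?ltnW.
have -> : k = l + d by rewrite eq_d subnKC 1?ltnW.
by rewrite !bin2D => /eqP; rewrite -!addnA !addKn eqn_add2r eqn_pmul2r // => /eqP ->.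
Qed.

Definition mark (L i : nat) : nat := i * L + 'C(i, 2).
Definition marks (m L p : nat) : {set 'Z_(p.+2)} := [set inZp (mark L i) | i : 'I_m].

Section Marks.

Context {m L r : nat}.
Hypotheses (r_gt : 2 * 'C(m.-1, 2) < r) (r_lt : r < L).

Local Notation n := (m * L + r).
Local Notation mark := (mark L).

Let bin2_le {i} : i < m -> 'C(i, 2) <= 'C(m.-1, 2).
Proof. by move=> lt_im; apply: leq_bin2l; rewrite -ltnS prednK // (leq_ltn_trans _ lt_im). Qed.

Lemma mark_subn {i j} : j <= i -> mark i - mark j = (i - j) * L + ('C(i, 2) - 'C(j, 2)).
Proof.
move=> le_ji; have := leq_bin2l 2 le_ji; have : j * L <= i * L by rewrite leq_mul2r le_ji orbT.
rewrite /mark mulnBl; lia.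
Qed.

Lemma mark_lt : {homo mark : i j / i < j}.
Proof.
move=> i j lt_ij; have := leq_bin2l 2 (ltnW lt_ij).
have : i * L < j * L by rewrite ltn_pmul2r // (leq_ltn_trans _ r_lt).
rewrite /mark; lia.
Qed.

Let leq_mark : {mono mark : i j / i <= j} := leq_mono mark_lt.

Lemma mark_lt_modulus {i} : i < m -> mark i < n.
Proof.
move=> lt_im; have := bin2_le lt_im.
have : i.+1 * L <= m * L by rewrite leq_mul2r lt_im orbT.
rewrite /mark mulSn; lia.
Qed.

Lemma cdiff_mark_gt {i j} : j < i -> i < m ->
  cdiff n (mark i) (mark j) = (i - j) * L + ('C(i, 2) - 'C(j, 2)).
Proof. by move=> /ltnW le_ji _; rewrite /cdiff leq_mark le_ji mark_subn. Qed.

Lemma cdiff_mark_lt {i j} : i < j -> j < m ->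
  cdiff n (mark i) (mark j) = (m - (j - i)) * L + (r - ('C(j, 2) - 'C(i, 2))).
Proof.
move=> lt_ij lt_jm.
rewrite /cdiff leq_mark leqNgt lt_ij /= mark_subn 1?ltnW // mulnBl.
have := bin2_le lt_jm; have : (j - i) * L <= m * L.
  by rewrite leq_mul2r (leq_trans (leq_subr _ _) (ltnW lt_jm)) orbT.
set q := (j - i) * L; lia.
Qed.

Lemma cdiff_mark_ge i j : i < m -> j < m -> i != j -> L <= cdiff n (mark i) (mark j).
Proof.
move=> lt_im lt_jm; case: (ltngtP i j) => // [lt_ij | lt_ji] _.
- rewrite (cdiff_mark_lt lt_ij lt_jm); apply: leq_trans (leq_addr _ _).
  by rewrite leq_pmull // subn_gt0 ltn_subLR ?ltn_addl // ltnW.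
- rewrite (cdiff_mark_gt lt_ji lt_im); apply: leq_trans (leq_addr _ _).
  by rewrite leq_pmull // subn_gt0.
Qed.

Lemma edivn_cdiff_mark_gt {i j} : j < i -> i < m ->
  edivn (cdiff n (mark i) (mark j)) L = (i - j, 'C(i, 2) - 'C(j, 2)).
Proof.
move=> lt_ji lt_im; rewrite (cdiff_mark_gt lt_ji lt_im) edivn_eq //.
by have := bin2_le lt_im; lia.
Qed.

Lemma edivn_cdiff_mark_lt {i j} : i < j -> j < m ->
  edivn (cdiff n (mark i) (mark j)) L = (m - (j - i), r - ('C(j, 2) - 'C(i, 2))).
Proof. by move=> lt_ij lt_jm; rewrite (cdiff_mark_lt lt_ij lt_jm) edivn_eq //; lia. Qed.

Lemma cdiff_mark_inj i j k l : i < m -> j < m -> k < m -> l < m -> i != j -> k != l ->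
  cdiff n (mark i) (mark j) = cdiff n (mark k) (mark l) -> i = k /\ j = l.
Proof.
move=> lt_im lt_jm lt_km lt_lm.
have Ci := bin2_le lt_im; have Cj := bin2_le lt_jm.
have Ck := bin2_le lt_km; have Cl := bin2_le lt_lm.
case: (ltngtP i j) => // cmp_ij _; case: (ltngtP k l) => // cmp_kl _;
  move/(congr1 (edivn^~ L)).
- rewrite (edivn_cdiff_mark_lt cmp_ij lt_jm) (edivn_cdiff_mark_lt cmp_kl lt_lm).
  by case=> eq_q eq_rem; have [] // := bin2_subn_inj cmp_ij cmp_kl; lia.
- by rewrite (edivn_cdiff_mark_lt cmp_ij lt_jm) (edivn_cdiff_mark_gt cmp_kl lt_km); case; lia.
- by rewrite (edivn_cdiff_mark_gt cmp_ij lt_im) (edivn_cdiff_mark_lt cmp_kl lt_lm); case; lia.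
- rewrite (edivn_cdiff_mark_gt cmp_ij lt_im) (edivn_cdiff_mark_gt cmp_kl lt_km).
  by case=> eq_q eq_rem; apply: bin2_subn_inj; lia.
Qed.

Context {p : nat}.
Hypothesis n_eq : p.+2 = n.

Local Notation marks := (marks m L p).

Let val_mark (i : 'I_m) : val (inZp (mark i) : 'Z_(p.+2)) = mark i.
Proof. by rewrite /= modn_small // n_eq mark_lt_modulus. Qed.

Let val_sub_mark (i j : 'I_m) :
  val (inZp (mark i) - inZp (mark j) : 'Z_(p.+2))%R = cdiff n (mark i) (mark j).
Proof. by rewrite val_Zp_sub !val_mark -n_eq. Qed.

Let neq_mark (i j : 'I_m) : (inZp (mark i) : 'Z_(p.+2)) != inZp (mark j) -> i != j.
Proof. by apply: contraNneq => ->. Qed.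

Lemma marks_sub_ge [x y] : x \in marks -> y \in marks -> x != y -> L <= val (x - y)%R.
Proof.
case/imsetP=> i _ -> /imsetP[j _ ->] /neq_mark ne_ij.
by rewrite val_sub_mark cdiff_mark_ge.
Qed.

Lemma marks_golomb : modular_golomb m marks.
Proof.
split; [|split].
- rewrite card_imset ?card_ord // => i j /(congr1 val).
  by rewrite !val_mark => /(incn_inj leq_mark) /val_inj.
- move=> x y x_in y_in /(marks_sub_ge x_in y_in) ge_L.
  by apply: contraTneq ge_L => ->; rewrite -ltnNge (leq_ltn_trans _ r_lt).
- move=> x y u v /imsetP[i _ ->] /imsetP[j _ ->] /imsetP[k _ ->] /imsetP[l _ ->].
  move=> /neq_mark ne_ij /neq_mark ne_kl /(congr1 val); rewrite !val_sub_mark.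
  by case/cdiff_mark_inj=> // /val_inj -> /val_inj ->.
Qed.

End Marks.

Lemma B_free_of_sub_ge {p L} {B : seq nat} {A : {set 'Z_(p.+2)}} :
  {in B, forall b, b < L} ->
  (forall x y, x \in A -> y \in A -> x != y -> L <= val (x - y)%R) -> B_free B A.
Proof.
move=> B_lt A_ge b /B_lt lt_bL; apply/imset2P=> -[x y x_in]; rewrite inE => /andP[y_in ne_xy].
move=> eq_b; have := A_ge x y x_in y_in ne_xy.
by rewrite -eq_b /= val_Zp_nat // leqNgt (leq_ltn_trans (leq_mod _ _)).
Qed.

Lemma ruler_parameters {w n b} : 5 <= w -> w * (2 * b + w ^ 2) <= n ->
  exists L r, [/\ n = (w - 1) * L + r, 2 * 'C((w - 1).-1, 2) < r, r < L & b < L].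
Proof.
move=> w_ge5 n_ge; set m := w - 1; set R := (2 * 'C(m.-1, 2)).+1.
have R_le : R + m <= w ^ 2.
  by rewrite /R bin2 /m; nia.
have [L_def s_lt] : n - R = (n - R) %/ m * m + (n - R) %% m /\ (n - R) %% m < m.
  by rewrite -divn_eq ltn_mod; lia.
set L := (n - R) %/ m in L_def *; set s := (n - R) %% m in L_def s_lt.
have le_Rn : R <= n by nia.
(* As r < w ^ 2, (w - 1) L = n - r exceeds 2 b w + (w - 1) w ^ 2, so L > w ^ 2 > r and L > b. *)
exists L, (R + s); split; [lia | lia | |].
- rewrite ltnNge; apply/negP => le_Lr; nia.
- rewrite ltnNge; apply/negP => le_Lb; nia.
Qed.

Theorem lemma2 (w n : nat) (B : seq nat) :
  5 <= w ->
  all (fun x => 0 < x < n) B ->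
  n >= w * (2 * (\max_(x <- B) x) + w ^ 2) ->
  exists A : {set 'Z_n}, modular_golomb (w - 1) A /\ B_free B A.
Proof.
(* B need not lie in [1, n - 1]: its elements are below L <= n anyway. *)
move=> w_ge5 _ n_ge.
have [L [r [n_def r_gt r_lt b_lt]]] := ruler_parameters w_ge5 n_ge.
have lt_B : {in B, forall x, x < L}.
  by move=> x x_in; apply: leq_ltn_trans (leq_bigmax_seq x x_in isT) b_lt.
have [p n_eq] : exists p, n = p.+2 by exists n.-2; rewrite n_def; nia.
rewrite n_eq in n_def *; exists (marks (w - 1) L p).
split; first exact: (marks_golomb r_gt r_lt n_def).
exact: (B_free_of_sub_ge lt_B (marks_sub_ge r_gt r_lt n_def)).
Qed.
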